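(* Let $X$ be a real Hilbert space and let $\bar{x},\hat{x}\in X$ be two distinct points. Let $\hat{H}$ be the halfspace $\{\tilde{x}:\langle\bar{x}-\hat{x},\tilde{x}-\hat{x}\rangle\leq0\}$. Suppose that $x\in X$ is such that $\hat{x}$ lies in the halfspace $H:=\{\tilde{x}:\langle\bar{x}-x,\tilde{x}-x\rangle\leq0\}$. Then $\|x-\hat{x}\|\leq\|\bar{x}-\hat{x}\|$ and $d(x,\hat{H})\geq\frac{\|x-\hat{x}\|^{2}}{\|\bar{x}-\hat{x}\|}$.
   Context: $d(y,S)=\inf_{s\in S}\|y-s\|$ denotes the distance from a point $y$ to a set $S$. *)

From HB Require Import structures.
From mathcomp Require Import all_boot all_order all_algebra.
From mathcomp Require Import all_classical all_reals all_analysis.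
Set Implicit Arguments. Unset Strict Implicit. Unset Printing Implicit Defensive.
Import Order.TTheory GRing.Theory Num.Theory.
Local Open Scope classical_set_scope.
Local Open Scope ring_scope.

(* [ip] is an inner product on the normed space V inducing its norm.
   A real Hilbert space is then a complete normed space V (completeNormedModType R)
   equipped with such an [ip]. *)
Definition is_inner_product (R : realType) (V : normedModType R) (ip : V -> V -> R) : Prop :=
  [/\ (forall x y, ip x y = ip y x),
      (forall (a : R) x y z, ip (a *: x + y) z = a * ip x z + ip y z),
      (forall x, 0 <= ip x x),
      (forall x, ip x x = 0 -> x = 0)
    & (forall x, `|x| = Num.sqrt (ip x x))].

Definition dist_to_set (R : realType) (V : normedModType R) (y : V) (S : set V) : R :=
  inf [set `|y - s| | s in S].

From HB Require Import structures.
From mathcomp Require Import all_boot all_order all_algebra.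
From mathcomp Require Import all_classical all_reals all_analysis.
From mathcomp Require Import lra.
Import Order.TTheory GRing.Theory Num.Theory.
Local Open Scope classical_set_scope.
Local Open Scope ring_scope.

Set Implicit Arguments.

(* Put a := xbar - xhat and b := x - xhat. Expanding the hypothesis
   <xbar - x, xhat - x> <= 0 gives |b|^2 <= <a, b>, so Cauchy-Schwarz yields
   |b| <= |a|. For t in Hhat we have <a, t - xhat> <= 0, hence
   |b|^2 <= <a, b> <= <a, x - t> <= |a| |x - t|, i.e. every point of Hhat is at
   distance at least |b|^2 / |a| from x. *)

Section InnerProduct.
Variables (R : realType) (V : normedModType R) (ip : V -> V -> R).
Hypothesis hip : is_inner_product ip.

Lemma ipC x y : ip x y = ip y x.
Proof. by case: hip. Qed.

Lemma ipDl x y z : ip (x + y) z = ip x z + ip y z.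
Proof. by case: hip => _ linl _ _ _; rewrite -[x in LHS]scale1r linl mul1r. Qed.

Lemma ip0l z : ip 0 z = 0.
Proof. by apply: (addrI (ip 0 z)); rewrite -ipDl !addr0. Qed.

Lemma ipZl a x z : ip (a *: x) z = a * ip x z.
Proof. by case: hip => _ linl _ _ _; have := linl a x 0 z; rewrite addr0 ip0l addr0. Qed.

Lemma ipNl x z : ip (- x) z = - ip x z.
Proof. by rewrite -scaleN1r ipZl mulN1r. Qed.

Lemma ipBl x y z : ip (x - y) z = ip x z - ip y z.
Proof. by rewrite ipDl ipNl. Qed.

Lemma ip0r z : ip z 0 = 0.
Proof. by rewrite ipC ip0l. Qed.

Lemma ipZr a x z : ip z (a *: x) = a * ip z x.
Proof. by rewrite ipC ipZl ipC. Qed.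

Lemma ipNr x z : ip z (- x) = - ip z x.
Proof. by rewrite ipC ipNl ipC. Qed.

Lemma ipBr x y z : ip z (x - y) = ip z x - ip z y.
Proof. by rewrite !(ipC z) ipBl. Qed.

Lemma ip_sqr_norm x : ip x x = `|x| ^+ 2.
Proof. by case: hip => _ _ ip_ge0 _ ->; rewrite sqr_sqrtr. Qed.

Lemma ip_le_norm x y : ip x y <= `|x| * `|y|.
Proof.
have [->|x0] := eqVneq x 0; first by rewrite ip0l normr0 mul0r.
have [->|y0] := eqVneq y 0; first by rewrite ip0r normr0 mulr0.
have nxy_gt0 : 0 < `|x| * `|y| by rewrite mulr_gt0 ?normr_gt0.
(* expand 0 <= | |y| x - |x| y |^2 = 2 |x| |y| (|x| |y| - <x, y>) *)
have : 0 <= ip (`|y| *: x - `|x| *: y) (`|y| *: x - `|x| *: y).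
  by rewrite ip_sqr_norm sqr_ge0.
rewrite ipBl !ipBr !ipZl !ipZr !ip_sqr_norm (ipC y x) => expand.
by rewrite -(ler_pM2l nxy_gt0); nra.
Qed.

Lemma sqr_norm_le_ip_of_obtuse xbar xhat x :
  ip (xbar - x) (xhat - x) <= 0 -> `|x - xhat| ^+ 2 <= ip (xbar - xhat) (x - xhat).
Proof.
have -> : xbar - x = (xbar - xhat) - (x - xhat) by rewrite opprB addrA subrK.
have -> : xhat - x = - (x - xhat) by rewrite opprB.
by rewrite ipNr ipBl ip_sqr_norm; lra.
Qed.

Lemma norm_le_of_sqr_norm_le_ip a b : `|b| ^+ 2 <= ip a b -> `|b| <= `|a|.
Proof.
move=> /le_trans/(_ (ip_le_norm a b)).
have [->|b0] := eqVneq b 0; first by rewrite normr0.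
by rewrite expr2 ler_pM2r ?normr_gt0.
Qed.

Lemma ip_le_norm_dist_of_obtuse a xhat x t :
  ip a (t - xhat) <= 0 -> ip a (x - xhat) <= `|a| * `|x - t|.
Proof.
move=> obtuse; apply: le_trans (ip_le_norm a (x - t)).
have -> : x - t = (x - xhat) - (t - xhat) by rewrite opprB addrA subrK.
by rewrite (ipBr (x - xhat)) lerDl oppr_ge0.
Qed.

End InnerProduct.

Theorem proposition4p1 (R : realType) (X : completeNormedModType R)
  (ip : X -> X -> R) (hip : is_inner_product ip)
  (xbar xhat x : X) (hneq : xbar != xhat) :
  let Hhat := [set t : X | ip (xbar - xhat) (t - xhat) <= 0] in
  let H := [set t : X | ip (xbar - x) (t - x) <= 0] in
  H xhat ->
  `|x - xhat| <= `|xbar - xhat| /\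
  dist_to_set x Hhat >= `|x - xhat| ^+ 2 / `|xbar - xhat|.
Proof.
move=> Hhat H /(sqr_norm_le_ip_of_obtuse hip) key.
split; first exact: norm_le_of_sqr_norm_le_ip key.
have na_gt0 : 0 < `|xbar - xhat| by rewrite normr_gt0 subr_eq0.
apply: lb_le_inf.
  by exists `|x - xhat|, xhat => //; rewrite /Hhat /= subrr ip0r.
move=> _ [t Ht <-]; rewrite ler_pdivrMr // mulrC.
exact: le_trans key (ip_le_norm_dist_of_obtuse hip _ _ x t Ht).
Qed.
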